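(* Let $\mathcal M'=\bigcup_{K=1}^{\min(M+1,N)}\mathcal F_K^{\mathrm{in}}\times \mathcal Q_K^{\mathrm{an}}$. Then $\mathcal M'$ is identifiable: for all $(F^1,Q^1),(F^2,Q^2)\in\mathcal M'$, $F^1Q^1=F^2Q^2$ implies $(F^1,Q^1)\sim(F^2,Q^2)$.
   Context: Fix positive integers $M$ and $N$. For a positive integer $K$, $\mathcal F_K$ is the set of real $M\times K$ matrices with all entries in $[0,1]$, and $\mathcal Q_K$ is the set of real $K\times N$ matrices with entries in $[0,1]$ each of whose columns sums to $1$. $e_k$ denotes the $k$-th standard basis vector, and $A_{\star j}$ denotes the $j$-th column of a matrix $A$. $\mathcal Q_K^{\mathrm{an}}$ is the set of $Q\in\mathcal Q_K$ such that for every $k\in\{1,\dots,K\}$ there is $i\in\{1,\dots,N\}$ with $Q_{\star i}=e_k$. $\mathcal F_K^{\mathrm{in}}$ is the set of $F\in\mathcal F_K$ such that the vectors $F_{\star 1}-F_{\star K},\dots,F_{\star K-1}-F_{\star K}$ are linearly independent (a vacuous condition when $K=1$). Two pairs are equivalent, $(F^1,Q^1)\sim(F^2,Q^2)$, if $F^1,F^2$ have the same number $K$ of columns and there is a permutation $\pi$ of $\{1,\dots,K\}$ with $F^2_{sk}=F^1_{s\pi(k)}$ and $Q^2_{ki}=Q^1_{\pi(k)i}$ for all $s,k,i$. A set $\mathcal M\subseteq\bigcup_{K\ge1}\mathcal F_K\times\mathcal Q_K$ is called identifiable if for all $(F^1,Q^1),(F^2,Q^2)\in\mathcal M$, $F^1Q^1=F^2Q^2$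 implies $(F^1,Q^1)\sim(F^2,Q^2)$. *)

From mathcomp Require Import all_boot all_order all_fingroup all_algebra.
From mathcomp Require Import reals.
Set Implicit Arguments. Unset Strict Implicit. Unset Printing Implicit Defensive.
Import Order.TTheory GRing.Theory Num.Theory.
Local Open Scope ring_scope.

Section Defs.
Variable R : realType.

Definition inF (M K : nat) (F : 'M[R]_(M, K)) : Prop :=
  forall s k, 0 <= F s k <= 1.

Definition inQ (K N : nat) (Q : 'M[R]_(K, N)) : Prop :=
  (forall k i, 0 <= Q k i <= 1) /\ (forall i, \sum_(k < K) Q k i = 1).

Definition e_vec (K : nat) (k : 'I_K) : 'cV[R]_K := delta_mx k 0.

Definition inQan (K N : nat) (Q : 'M[R]_(K, N)) : Prop :=
  inQ Q /\ forall k : 'I_K, exists i : 'I_N, col i Q = e_vec k.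

(* F in \mathcal F_K^in : the K-1 vectors F_{*k} - F_{*K} (k = 1..K-1, i.e.
   0-based indices k < K-1, with K-1 the last column) are linearly independent *)
Definition inFin (M K : nat) (F : 'M[R]_(M, K)) : Prop :=
  inF F /\
  forall (last : 'I_K), (last : nat) = K.-1 ->
  forall c : 'I_K -> R,
    \sum_(k < K | ((k : nat) < K.-1)%N) c k *: (col k F - col last F) = 0 ->
    forall k : 'I_K, ((k : nat) < K.-1)%N -> c k = 0.

Definition pair_equiv (M N K1 K2 : nat)
  (F1 : 'M[R]_(M, K1)) (Q1 : 'M[R]_(K1, N))
  (F2 : 'M[R]_(M, K2)) (Q2 : 'M[R]_(K2, N)) : Prop :=
  exists eK : K1 = K2, exists pi : {perm 'I_K1},
    (forall s (k : 'I_K1), F2 s (cast_ord eK k) = F1 s (pi k)) /\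
    (forall (k : 'I_K1) i, Q2 (cast_ord eK k) i = Q1 (pi k) i).

Definition inMprime (M N K : nat) (F : 'M[R]_(M, K)) (Q : 'M[R]_(K, N)) : Prop :=
  (1 <= K)%N /\ (K <= minn M.+1 N)%N /\ inFin F /\ inQan Q.

End Defs.

From mathcomp Require Import all_boot all_order all_fingroup all_algebra.
From mathcomp Require Import reals.
Set Implicit Arguments. Unset Strict Implicit. Unset Printing Implicit Defensive.
Import GRing.Theory Num.Theory.
Local Open Scope ring_scope.

(* An anchor column of Q1 reproduces the k-th column of F1 inside the data
   F1 Q1 = F2 Q2, so it equals F2 a for a probability vector a; through the
   anchors of Q2 we also get F2 = F1 B with B column stochastic. Hence
   F1 e_k = F1 (B a), and an affinely independent F1 is injective on vectors
   with a given coordinate sum, so e_k = B a. A convex combination of numbers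
   at most 1 equals 1 only if one of them is 1, so some column of B is e_k and
   the k-th column of F1 is a column of F2. By symmetry and injectivity of
   k |-> F_{*k} the columns agree up to a permutation, and injectivity of F2 on
   stochastic matrices then identifies Q2 with the permuted Q1. *)

Lemma col_matrixP (T : Type) (m n : nat) (A B : 'M[T]_(m, n)) :
  (forall j, col j A = col j B) <-> A = B.
Proof.
split=> [eqAB | -> //]; apply/matrixP=> i j.
by move/matrixP: (eqAB j) => /(_ i 0); rewrite !mxE.
Qed.

Lemma col_mulmx (R : pzSemiRingType) (m n p : nat)
    (A : 'M[R]_(m, n)) (B : 'M[R]_(n, p)) (j : 'I_p) :
  col j (A *m B) = A *m col j B.
Proof. by rewrite !colE mulmxA. Qed.

Lemma mulmx_sum_col (R : comPzSemiRingType) (m n : nat) (F : 'M[R]_(m, n))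
    (v : 'cV[R]_n) :
  F *m v = \sum_k v k 0 *: col k F.
Proof.
apply/matrixP=> i j; rewrite (ord1 j) !mxE summxE.
by apply: eq_bigr=> k _; rewrite !mxE mulrC.
Qed.

Section AffineFree.
Variables (R : pzRingType) (m n : nat).
Implicit Types (F : 'M[R]_(m, n)).

Definition affine_free F :=
  forall v : 'cV[R]_n, F *m v = 0 -> \sum_k v k 0 = 0 -> v = 0.

Lemma affine_free_mulmx_inj F (p : nat) (A B : 'M[R]_(n, p)) :
  affine_free F -> F *m A = F *m B ->
  (forall j, \sum_k A k j = \sum_k B k j) -> A = B.
Proof.
move=> freeF eFAB esum; apply/col_matrixP=> j; apply/eqP; rewrite -subr_eq0.
apply/eqP/freeF; first by rewrite mulmxBr -!col_mulmx eFAB subrr.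
under eq_bigr do rewrite !mxE.
by rewrite sumrB esum subrr.
Qed.

End AffineFree.

Section ColumnStochastic.
Variable R : realType.

Lemma inFin_affine_free (m n : nat) (F : 'M[R]_(m, n)) :
  inFin F -> affine_free F.
Proof.
case: n F => [|n] F [_ indepF] v Fv0 sumv0; first by apply/matrixP=> -[].
have lt_max (k : 'I_n.+1) : k != ord_max -> (k < n)%N.
  by rewrite -val_eqE /= => nek; rewrite ltn_neqAle nek -ltnS ltn_ord.
pose d k := col k F - col ord_max F.
have sum_d : \sum_k v k 0 *: d k = 0.
  under eq_bigr do rewrite scalerBr.
  by rewrite sumrB -mulmx_sum_col Fv0 -scaler_suml sumv0 scale0r subrr.
have v0 := indepF ord_max erefl (v^~ 0).
have {}v0 k : k != ord_max -> v k 0 = 0.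
  move=> /lt_max; apply: v0; rewrite -[RHS]sum_d big_mkcond; apply: eq_bigr=> l _.
  have [-> | /lt_max -> //] := eqVneq l ord_max.
  by rewrite /d subrr scaler0; case: ifP.
apply/matrixP=> k j; rewrite (ord1 j) mxE.
have [-> | /v0 //] := eqVneq k ord_max.
by move: sumv0; rewrite (bigD1 ord_max) //= big1 ?addr0.
Qed.

Lemma inQ_col (K N : nat) (Q : 'M[R]_(K, N)) (j : 'I_N) : inQ Q -> inQ (col j Q).
Proof.
case=> Q01 Qsum; split=> [k i | i]; first by rewrite mxE.
by rewrite -(Qsum j); apply: eq_bigr=> k _; rewrite mxE.
Qed.

Lemma inQ_colsub (K N N' : nat) (g : 'I_N' -> 'I_N) (Q : 'M[R]_(K, N)) :
  inQ Q -> inQ (colsub g Q).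
Proof.
case=> Q01 Qsum; split=> [k i | i]; first by rewrite mxE.
by rewrite -(Qsum (g i)); apply: eq_bigr=> k _; rewrite mxE.
Qed.

Lemma inQ_row_perm (K N : nat) (s : {perm 'I_K}) (Q : 'M[R]_(K, N)) :
  inQ Q -> inQ (row_perm s Q).
Proof.
case=> Q01 Qsum; split=> [k i | i]; first by rewrite mxE.
rewrite -(Qsum i) [RHS](reindex_inj (@perm_inj _ s)) /=.
by apply: eq_bigr=> k _; rewrite mxE.
Qed.

Lemma inQ_delta (K : nat) (k : 'I_K) : inQ (delta_mx k 0 : 'cV[R]_K).
Proof.
split=> [l i | i]; first by rewrite mxE ler0n lern1 leq_b1.
rewrite (ord1 i) (bigD1 k) //= big1 => [|l /negPf nelk]; last by rewrite mxE nelk.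
by rewrite mxE !eqxx addr0.
Qed.

Lemma inQ_mulmx (K L N : nat) (A : 'M[R]_(K, L)) (B : 'M[R]_(L, N)) :
  inQ A -> inQ B -> inQ (A *m B).
Proof.
case=> A01 Asum [B01 Bsum]; split=> [k i | i].
  rewrite mxE -(Bsum i); apply/andP; split.
    by apply: sumr_ge0=> l _; apply: mulr_ge0;
      [case/andP: (A01 k l) | case/andP: (B01 l i)].
  apply: ler_sum=> l _; rewrite ler_piMl //; first by case/andP: (B01 l i).
  by case/andP: (A01 k l).
under eq_bigr do rewrite mxE.
rewrite exchange_big /= -(Bsum i); apply: eq_bigr=> l _.
by rewrite -mulr_suml Asum mul1r.
Qed.

Lemma affine_free_inQ_inj (m K N : nat) (F : 'M[R]_(m, K)) (A B : 'M[R]_(K, N)) :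
  affine_free F -> inQ A -> inQ B -> F *m A = F *m B -> A = B.
Proof.
move=> freeF [_ Asum] [_ Bsum] eFAB.
by apply: affine_free_mulmx_inj freeF eFAB _ => j; rewrite Asum Bsum.
Qed.

Lemma inQ_eq_delta (K : nat) (a : 'cV[R]_K) (k : 'I_K) :
  inQ a -> a k 0 = 1 -> a = delta_mx k 0.
Proof.
case=> a01 asum ak1; apply/colP=> l; rewrite mxE eqxx andbT.
have [-> // | nelk] := eqVneq l k.
have rest0 : \sum_(j | j != k) a j 0 = 0.
  by have := asum 0; rewrite (bigD1 k) //= ak1 -[RHS]addr0 => /addrI.
by apply: (psumr_eq0P _ rest0) => // j _; case/andP: (a01 j 0).
Qed.

Lemma inQ_comb_eq1 (K : nat) (a : 'cV[R]_K) (b : 'I_K -> R) :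
  inQ a -> (forall j, b j <= 1) -> \sum_j b j * a j 0 = 1 -> exists j, b j = 1.
Proof.
case=> a01 asum b_le1 comb1.
have gap0 : \sum_j a j 0 * (1 - b j) = 0.
  under eq_bigr do rewrite mulrBr mulr1 mulrC.
  by rewrite sumrB asum comb1 subrr.
have [j aj_neq0] : exists j, a j 0 != 0.
  apply/existsP; apply: contraT; rewrite negb_exists => /forallP a0.
  by move: (asum 0); rewrite big1 => [/eqP | j _];
    [rewrite eq_sym oner_eq0 | apply/eqP/negPn].
have /eqP : a j 0 * (1 - b j) = 0.
  apply: (psumr_eq0P _ gap0) => // l _.
  by rewrite mulr_ge0 ?subr_ge0 //; case/andP: (a01 l 0).
by rewrite mulf_eq0 (negPf aj_neq0) subr_eq0 eq_sym => /eqP; exists j.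
Qed.

Lemma affine_free_col_inj (m K : nat) (F : 'M[R]_(m, K)) :
  affine_free F -> injective (fun k => col k F).
Proof.
move=> freeF k l eFkl.
have : delta_mx k 0 = delta_mx l 0 :> 'cV[R]_K.
  by apply: (affine_free_inQ_inj freeF (inQ_delta k) (inQ_delta l)); rewrite -!colE.
move/matrixP/(_ k 0); rewrite !mxE !eqxx andbT.
by case: eqP => // _ /eqP; rewrite eqr_nat.
Qed.

Lemma affine_free_vertex_mixture (m K L : nat) (F : 'M[R]_(m, K))
    (B : 'M[R]_(K, L)) (a : 'cV[R]_L) (k : 'I_K) :
  affine_free F -> inQ B -> inQ a -> col k F = F *m B *m a ->
  exists j, col j B = delta_mx k 0.
Proof.
move=> freeF QB Qa ekFBa.
have eBa : delta_mx k 0 = B *m a.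
  apply: (affine_free_inQ_inj freeF (inQ_delta k) (inQ_mulmx QB Qa)).
  by rewrite -colE mulmxA.
have [j Bkj1] : exists j, B k j = 1.
  apply: inQ_comb_eq1 Qa _ _ => [j | ]; first by case/andP: (QB.1 k j).
  by move/matrixP: eBa => /(_ k 0); rewrite !mxE !eqxx => <-.
by exists j; apply: inQ_eq_delta (inQ_col j QB) _; rewrite mxE.
Qed.

Lemma anchored_factor (m K1 K2 N : nat) (F1 : 'M[R]_(m, K1)) (Q1 : 'M[R]_(K1, N))
    (F2 : 'M[R]_(m, K2)) (Q2 : 'M[R]_(K2, N)) :
  inQ Q1 -> inQan Q2 -> F1 *m Q1 = F2 *m Q2 ->
  exists2 B : 'M[R]_(K1, K2), inQ B & F2 = F1 *m B.
Proof.
move=> QQ1 [_ anchor2] eP; have [g colQ2g] := fin_all_exists anchor2.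
exists (colsub g Q1); first exact: inQ_colsub.
apply/col_matrixP=> j; rewrite col_mulmx col_colsub -col_mulmx eP col_mulmx.
by rewrite colQ2g /e_vec -colE.
Qed.

Lemma anchored_col_shared (m K1 K2 N : nat) (F1 : 'M[R]_(m, K1)) (Q1 : 'M[R]_(K1, N))
    (F2 : 'M[R]_(m, K2)) (Q2 : 'M[R]_(K2, N)) :
  affine_free F1 -> inQan Q1 -> inQan Q2 -> F1 *m Q1 = F2 *m Q2 ->
  forall k, exists j, col j F2 = col k F1.
Proof.
move=> freeF1 [QQ1 anchor1] anQ2 eP k.
have [B QB eF2] := anchored_factor QQ1 anQ2 eP.
have [i colQ1i] := anchor1 k.
have [j colBj] : exists j, col j B = delta_mx k 0.
  apply: affine_free_vertex_mixture freeF1 QB (inQ_col i anQ2.1) _.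
  by rewrite -eF2 -col_mulmx -eP col_mulmx colQ1i -colE.
by exists j; rewrite eF2 col_mulmx colBj -colE.
Qed.

Lemma pair_equiv_perm (m N K : nat) (F : 'M[R]_(m, K)) (Q : 'M[R]_(K, N))
    (s : {perm 'I_K}) :
  pair_equiv F Q (col_perm s F) (row_perm s Q).
Proof. by exists erefl, s; split=> *; rewrite cast_ord_id mxE. Qed.

End ColumnStochastic.

Theorem mainTheorem1 (R : realType) (M N : nat) (HM : (0 < M)%N) (HN : (0 < N)%N)
  (K1 K2 : nat)
  (F1 : 'M[R]_(M, K1)) (Q1 : 'M[R]_(K1, N))
  (F2 : 'M[R]_(M, K2)) (Q2 : 'M[R]_(K2, N)) :
  inMprime F1 Q1 -> inMprime F2 Q2 ->
  F1 *m Q1 = F2 *m Q2 ->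
  pair_equiv F1 Q1 F2 Q2.
Proof.
move=> [_ [_ [/inFin_affine_free free1 anQ1]]]
  [_ [_ [/inFin_affine_free free2 anQ2]]] eP.
have [f col_f] := fin_all_exists (anchored_col_shared free1 anQ1 anQ2 eP).
have [g col_g] := fin_all_exists (anchored_col_shared free2 anQ2 anQ1 (esym eP)).
have f_inj : injective f.
  by move=> k l efkl; apply: (affine_free_col_inj free1); rewrite -!col_f efkl.
have g_inj : injective g.
  by move=> k l egkl; apply: (affine_free_col_inj free2); rewrite -!col_g egkl.
have eK : K1 = K2.
  have := leq_card f f_inj; have := leq_card g g_inj; rewrite !card_ord => le21 le12.
  by apply/eqP; rewrite eqn_leq le12 le21.
subst K2; pose s := perm g_inj.
have eF2 : F2 = col_perm s F1.
  by apply/col_matrixP=> k; rewrite col_permEsub col_colsub permE col_g.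
have eQ2 : Q2 = row_perm s Q1.
  apply: (affine_free_inQ_inj free2 anQ2.1 (inQ_row_perm s anQ1.1)).
  by rewrite -eP mul_row_perm eF2 -col_permM mulVg col_perm1.
by rewrite eF2 eQ2; apply: pair_equiv_perm.
Qed.
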